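(* For any configuration $G$, if $G$ is feasible then there exist a patient DRIP $D_{pat}$ and a decision function $f_{pat}$ for $D_{pat}$ such that $(D_{pat},f_{pat})$ is a dedicated leader election algorithm for $G$.
   Context: Model. A configuration is a finite simple undirected connected graph $G$ in which each node $v$ is tagged with a non-negative integer $t_v$ (its wakeup tag); smallest tag $0$, span $\sigma$ = largest tag. Nodes are anonymous and communicate in synchronous global rounds. A node $v$ wakes up in the first global round $r\le t_v$ in which it receives a message, if any, and otherwise in global round $t_v$. Its local clock is $0$ in its wakeup round; it acts from local round $1$ on. In each round a node transmits a message to all neighbours, listens, or terminates. A listening node receives $M$ if exactly one neighbour transmits ($M$), hears collision noise (distinct from silence and messages) if at least two neighbours transmit, and silence otherwise; a transmitting node hears nothing. History $\mathcal H_v[i]$ of $v$ in local round $i\ge0$: $(\emptyset)$ if $v$ transmits or hears silence (or $i=0$ and spontaneous wakeup), $(M)$ if $v$ receives $M$ (or $i=0$ and woken by $M$), $( * )$ on collision. A DRIP is a function $D$ from finite history vectors to $\{\mathit{listen},\mathit{transmit}(M),\mathit{terminate}\}$; node $v$ in local round $i\ge1$ performs $D(\mathcal H_v[0\ldots i-1])$; every node must eventually terminate permanently, $done_v$ being the first local round it terminates. A decision function $f$ for $D$ maps $\mathcal H_v[0\ldots done_v]$ to $\{0,1\}$. $(D,f)$ is a dedicated leader election algorithm for $G$ if, when all nodes of $G$ execute $D$, $f$ outputs $1$ at exactly one node; $G$ is feasible if such a pair exists. A DRIP is patient (for $G$) if, when executed by all nodes of $G$, no node transmits in any of the global rounds $0,\ldots,\sigma$.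 *)

From mathcomp Require Import all_boot.
Set Implicit Arguments. Unset Strict Implicit. Unset Printing Implicit Defensive.

(* History entries: silence/transmitting ((empty)), a received message (M), collision ( * ). *)
Inductive entry : Type := ESil | EMsg of nat | ECol.
Inductive action : Type := Listen | Transmit of nat | Terminate.

Definition drip := seq entry -> action.
(* A decision function: from final histories H[0..done_v] to {0,1} (false=0, true=1). *)
Definition decision := seq entry -> bool.

Section Execution.
Variables (V : finType) (adj : rel V) (t : V -> nat) (D : drip).

(* Node state before a global round: None = asleep;
   Some (h, b) = awake with history h (h = H[0 .. size h - 1]), b = terminated. *)
Definition nstate := V -> option (seq entry * bool).

Definition tx (s : nstate) (u : V) : option nat :=
  match s u with
  | Some (h, false) => if D h is Transmit m then Some m else None
  | _ => None
  end.

Definition reception (s : nstate) (v : V) : entry :=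
  match pmap (tx s) (filter (adj v) (enum V)) with
  | [::] => ESil
  | [:: m] => EMsg m
  | _ => ECol
  end.

Definition step (s : nstate) (r : nat) : nstate := fun v =>
  match s v with
  | None =>
      if reception s v is EMsg m then Some ([:: EMsg m], false)
      else if t v == r then Some ([:: ESil], false) else None
  | Some (h, true) => Some (h, true)
  | Some (h, false) =>
      match D h with
      | Transmit _ => Some (rcons h ESil, false)
      | Listen => Some (rcons h (reception s v), false)
      | Terminate => Some (rcons h (reception s v), true)
      end
  end.

(* exec r = state of all nodes before global round r *)
Fixpoint exec (r : nat) : nstate :=
  match r with
  | 0 => fun _ => None
  | r'.+1 => step (exec r') r'
  end.

End Execution.

Definition configuration (V : finType) (adj : rel V) (t : V -> nat) : Prop :=
  [/\ symmetric adj, irreflexive adj, (forall x y : V, connect adj x y)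
    & exists v, t v = 0].

Definition span (V : finType) (t : V -> nat) : nat := \max_(v : V) t v.

Definition dedicated_LE (V : finType) (adj : rel V) (t : V -> nat)
    (D : drip) (f : decision) : Prop :=
  exists R : nat,
    (forall v : V, exists h, exec adj t D R v = Some (h, true)) /\
    #|[pred v : V | if exec adj t D R v is Some (h, true) then f h else false]| = 1.

Definition feasible (V : finType) (adj : rel V) (t : V -> nat) : Prop :=
  exists (D : drip) (f : decision), dedicated_LE adj t D f.

Definition patient (V : finType) (adj : rel V) (t : V -> nat) (D : drip) : Prop :=
  forall r : nat, r <= span t -> forall v : V, tx D (exec adj t D r) v = None.

(* The patient algorithm runs D shifted by S = span t rounds.  Nobody transmits before
   global round S + 1, so every node wakes spontaneously at its tag and listens; it starts
   simulating D, on the part of its history from then on, at the first round in which it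
   hears a message or at local round S, whichever comes first.  By induction on r, each
   node's state in round r + S of the patient execution is the virtual image of its state
   in round r of D, so the same nodes terminate and the same node is elected. *)

From mathcomp Require Import all_boot zify.

Set Implicit Arguments. Unset Strict Implicit. Unset Printing Implicit Defensive.

Definition is_msg (e : entry) : bool := if e is EMsg _ then true else false.

Definition wake_entry (e : entry) : entry := if e is EMsg m then EMsg m else ESil.

Section Execution.
Variables (V : finType) (adj : rel V) (t : V -> nat) (D : drip).

Lemma exec_succ r : exec adj t D r.+1 = step adj t D (exec adj t D r) r.
Proof. by []. Qed.

Lemma step_asleep s r v (e := reception adj D s v) : s v = None ->
  step adj t D s r v =
    if is_msg e || (t v == r) then Some ([:: wake_entry e], false) else None.
Proof. by rewrite /step /e => ->; case: reception. Qed.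

Lemma step_listen s r v h : s v = Some (h, false) -> D h = Listen ->
  step adj t D s r v = Some (rcons h (reception adj D s v), false).
Proof. by rewrite /step => -> ->. Qed.

Lemma eq_reception (D' : drip) s s' v :
  (forall u, tx D s u = tx D' s' u) -> reception adj D s v = reception adj D' s' v.
Proof. by move=> eq_tx; rewrite /reception (eq_pmap eq_tx). Qed.

Lemma reception_silent s v : (forall u, tx D s u = None) -> reception adj D s v = ESil.
Proof.
move=> silent; rewrite /reception.
suff -> : pmap (tx D s) (filter (adj v) (enum V)) = [::] by [].
by elim: (filter _ _) => //= u us ->; rewrite silent.
Qed.

End Execution.

Lemma leq_find_cat (T : Type) (a : pred T) s s' : find a s <= find a (s ++ s').
Proof.
by rewrite find_cat; case: ifP => // /negbT; rewrite has_find; have := find_size a s; lia.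
Qed.

(* A node woken at its tag reaches local round [S] in global round tag + [S], the image
   under the shift of the round in which D would wake it spontaneously. *)
Definition wakeup_index (S : nat) (h : seq entry) : nat :=
  minn (find is_msg (behead h)).+1 S.

Definition woken (S : nat) (h : seq entry) : bool := wakeup_index S h < size h.

Definition virtual_history (S : nat) (h : seq entry) : seq entry :=
  wake_entry (nth ESil h (wakeup_index S h)) :: drop (wakeup_index S h).+1 h.

Definition patient_drip (S : nat) (D : drip) : drip :=
  fun h => if woken S h then D (virtual_history S h) else Listen.

Definition patient_decision (S : nat) (f : decision) : decision :=
  fun h => f (virtual_history S h).

Section VirtualHistory.
Variable S : nat.

Lemma woken_cons x h : woken S (x :: h) = has is_msg h || (S <= size h).
Proof. by rewrite /woken /wakeup_index /= has_find; lia. Qed.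

Lemma leq_wakeup_index_rcons h e : wakeup_index S h <= wakeup_index S (rcons h e).
Proof.
case: h => [|x h] //; rewrite /wakeup_index rcons_cons /= -cats1.
by have := leq_find_cat is_msg h [:: e]; lia.
Qed.

Lemma wakeup_index_rcons h e :
  woken S h -> wakeup_index S (rcons h e) = wakeup_index S h.
Proof.
case: h => [|x h] //; rewrite woken_cons /wakeup_index rcons_cons /= -cats1 find_cat.
by case: ifP => // /negbT; rewrite has_find; have := find_size is_msg h; lia.
Qed.

Lemma woken_rcons h e : woken S h -> woken S (rcons h e).
Proof.
move=> wh; rewrite /woken wakeup_index_rcons // size_rcons.
exact: leqW.
Qed.

Lemma virtual_history_rcons h e :
  woken S h -> virtual_history S (rcons h e) = rcons (virtual_history S h) e.
Proof.
move=> wh; rewrite /virtual_history wakeup_index_rcons // nth_rcons.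
move: wh; rewrite /woken => wh; rewrite wh -!cats1 drop_cat.
case: ltnP => // big; have -> : (wakeup_index S h).+1 - size h = 0 by lia.
by rewrite drop0 drop_oversize.
Qed.

Lemma woken_rcons_unwoken h e : 0 < size h -> ~~ woken S h ->
  woken S (rcons h e) = is_msg e || (size h == S).
Proof.
case: h => [|x h] // _; rewrite rcons_cons !woken_cons has_rcons size_rcons.
by case: (has _ _) => //=; case: (is_msg e); lia.
Qed.

Lemma virtual_history_wake h e : ~~ woken S h -> woken S (rcons h e) ->
  virtual_history S (rcons h e) = [:: wake_entry e].
Proof.
move=> uh wh'; have /eqP wi : wakeup_index S (rcons h e) == size h.
  move: uh wh'; rewrite /woken size_rcons -leqNgt eqn_leq ltnS => uh ->.
  exact: leq_trans uh (leq_wakeup_index_rcons h e).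
by rewrite /virtual_history wi nth_rcons ltnn eqxx drop_oversize // size_rcons.
Qed.

End VirtualHistory.

Lemma patient_drip_unwoken S D h : ~~ woken S h -> patient_drip S D h = Listen.
Proof. by rewrite /patient_drip => /negbTE ->. Qed.

Lemma patient_drip_woken S D h :
  woken S h -> patient_drip S D h = D (virtual_history S h).
Proof. by rewrite /patient_drip => ->. Qed.

Section Simulation.
Variables (V : finType) (adj : rel V) (t : V -> nat) (D : drip).
Local Notation S := (span t).
Local Notation P := (patient_drip (span t) D).

Lemma tag_le_span v : t v <= S.
Proof. exact: (leq_bigmax (F := t) v). Qed.

Definition waiting g v :=
  if g <= t v then exec adj t P g v = None
  else exists h, [/\ exec adj t P g v = Some (h, false), size h = g - t v & ~~ woken S h].

Lemma waiting_tx g v : waiting g v -> tx P (exec adj t P g) v = None.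
Proof.
rewrite /waiting /tx; case: ifP => _; first by move=> ->.
by case=> h [-> _ uh]; rewrite patient_drip_unwoken //.
Qed.

Lemma waiting_succ g v (e := reception adj P (exec adj t P g) v) :
  waiting g v -> ~~ is_msg e -> g.+1 - t v <= S -> waiting g.+1 v.
Proof.
rewrite /waiting exec_succ; case: ifP => le_g.
- move=> asleep not_msg small; rewrite step_asleep // -/e (negbTE not_msg) /=.
  case: eqP => [tv_g | tv_ne_g]; last by have -> : g < t v by lia.
  by rewrite tv_g ltnn; exists [:: wake_entry e]; rewrite woken_cons /=; split => //; lia.
- case=> h [awake size_h uh] not_msg small.
  rewrite (step_listen _ _ _ awake) ?patient_drip_unwoken // -/e.
  have -> : (g < t v) = false by lia.
  have pos_h : 0 < size h by lia.
  exists (rcons h e).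
  by rewrite size_rcons woken_rcons_unwoken // (negbTE not_msg); split => //; lia.
Qed.

Lemma waiting_patient g : g <= S -> forall v, waiting g v.
Proof.
elim: g => [//|g IH] lt_gS v; have wg := IH (ltnW lt_gS).
apply: waiting_succ; first exact: wg.
  by rewrite (reception_silent _ _ (fun u => waiting_tx (wg u))).
lia.
Qed.

Lemma waiting_wake g v (e := reception adj P (exec adj t P g) v) :
  waiting g v -> t v <= g -> (is_msg e && (t v < g)) || (g - t v == S) ->
  exists h, [/\ exec adj t P g.+1 v = Some (h, false), woken S h
              & virtual_history S h = [:: wake_entry e]].
Proof.
rewrite /waiting exec_succ; case: ifP => le_g.
- move=> asleep le_tv_g; have tv_g : t v = g by lia.
  rewrite step_asleep // -/e tv_g eqxx orbT ltnn subnn andbF eq_sym => /eqP S0.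
  exists [:: wake_entry e]; rewrite /woken /virtual_history /wakeup_index S0 minn0.
  by split => //; case: (e).
- case=> h [awake size_h uh] _ wake.
  rewrite (step_listen _ _ _ awake) ?patient_drip_unwoken // -/e.
  have wh : woken S (rcons h e).
    rewrite woken_rcons_unwoken ?size_h //; last by lia.
    by case: (is_msg e) wake => /=; lia.
  by exists (rcons h e); split => //; rewrite virtual_history_wake.
Qed.

Definition simulates r v :=
  match exec adj t D r v with
  | None => r <= t v /\ waiting (r + S) v
  | Some (h', b) => exists h, [/\ exec adj t P (r + S) v = Some (h, b), woken S h
                                 & virtual_history S h = h']
  end.

Lemma simulates_tx r v :
  simulates r v -> tx P (exec adj t P (r + S)) v = tx D (exec adj t D r) v.
Proof.
rewrite /simulates {2}/tx; case: (exec adj t D r v) => [[h' b] | [_ /waiting_tx //]].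
by case=> h [E wh <-]; rewrite /tx E; case: b {E} => //; rewrite patient_drip_woken.
Qed.

Lemma simulates0 v : simulates 0 v.
Proof. by split; last exact: waiting_patient. Qed.

Section SimulationStep.
Variables (r : nat) (v : V).
Hypothesis same_reception :
  reception adj P (exec adj t P (r + S)) v = reception adj D (exec adj t D r) v.

Lemma simulates_succ_awake h' b :
  exec adj t D r v = Some (h', b) -> simulates r v -> simulates r.+1 v.
Proof.
rewrite /simulates addSn !exec_succ /step same_reception => ->.
case=> h [-> wh <-]; case: b; first by exists h.
rewrite patient_drip_woken //.
by case: (D _) => [|m|];
  (eexists; split; [reflexivity | exact: woken_rcons | exact: virtual_history_rcons]).
Qed.

Lemma simulates_succ_asleep :
  exec adj t D r v = None -> simulates r v -> simulates r.+1 v.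
Proof.
move=> asleep; rewrite /simulates asleep addSn exec_succ step_asleep // => -[le_r wait].
move: same_reception; set e := reception adj D _ v => same_e.
have [wake | stay] := boolP (is_msg e || (t v == r)).
- have msg_late : is_msg e -> 0 < r.
    by rewrite lt0n; apply: contraTneq => r0; rewrite /e r0 reception_silent.
  have [|h [-> wh vh]] := waiting_wake wait (leq_trans (tag_le_span v) (leq_addl _ _)).
    rewrite same_e; case/orP: wake => [msg | /eqP <-]; last by rewrite addKn eqxx orbT.
    by rewrite msg /=; have := msg_late msg; have := tag_le_span v; lia.
  by exists h; rewrite vh same_e.
- move: stay; rewrite negb_or => /andP[not_msg tv_ne_r].
  have lt_r : r < t v by rewrite ltn_neqAle eq_sym tv_ne_r.
  split => //; apply: waiting_succ wait _ _; first by rewrite same_e.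
  lia.
Qed.

End SimulationStep.

Lemma simulation r v : simulates r v.
Proof.
elim: r v => [|r IH] v; first exact: simulates0.
have same_reception := eq_reception adj v (fun u => simulates_tx (IH u)).
case E: (exec adj t D r v) => [[h' b]|].
- exact: simulates_succ_awake E (IH v).
- exact: simulates_succ_asleep E (IH v).
Qed.

Lemma simulates_terminated r v h' :
  simulates r v -> exec adj t D r v = Some (h', true) ->
  exists h, exec adj t P (r + S) v = Some (h, true).
Proof. by rewrite /simulates => + E; rewrite E => -[h [Eh _ _]]; exists h. Qed.

Lemma simulates_decision (f : decision) r v : simulates r v ->
  (if exec adj t P (r + S) v is Some (h, true) then patient_decision S f h else false)
  = (if exec adj t D r v is Some (h, true) then f h else false).
Proof.
rewrite /simulates; case: (exec adj t D r v) => [[h' b] | [_]].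
  by case=> h [-> _ <-]; case: b.
by rewrite /waiting; case: ifP => _ => [-> | [h [-> _ _]]].
Qed.

End Simulation.

Theorem lemma9 (V : finType) (adj : rel V) (t : V -> nat) :
  configuration adj t -> feasible adj t ->
  exists (Dpat : drip) (fpat : decision),
    patient adj t Dpat /\ dedicated_LE adj t Dpat fpat.
Proof.
move=> _ [D [f [R [terminates elects]]]].
exists (patient_drip (span t) D), (patient_decision (span t) f); split.
  by move=> r le_r v; apply/waiting_tx/waiting_patient.
exists (R + span t); split.
  by move=> v; have [h' /(simulates_terminated (simulation _ _ _ R v))] := terminates v.
rewrite -elects; apply: eq_card => v; rewrite !inE.
exact: simulates_decision (simulation _ _ _ R v).
Qed.
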